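(* Let $n\ge2$ and let $A\in\mathbb{R}^{n\times n}$ be a nonnegative weighted shift matrix: $A_{i,i+1}=c_i\ge 0$ for $i=1,\dots,n-1$ and $A_{ij}=0$ otherwise, with $c_i>0$ for at least one $i$. Then $r(t):=r\big((1-t)A+tA^{\top}\big)$ is strictly concave in $t$ on $(0,1)$.
   Context: $r(M)$ denotes the spectral radius of a square matrix $M$; the function $t\mapsto r((1-t)A+tA^\top)$ is called Levinger's function of $A$. *)

From HB Require Import structures.
From mathcomp Require Import all_boot all_order all_algebra.
From mathcomp Require Import all_classical all_reals.
From mathcomp Require Import complex.
Set Implicit Arguments. Unset Strict Implicit. Unset Printing Implicit Defensive.
Import Order.TTheory GRing.Theory Num.Theory.
Local Open Scope ring_scope.
Local Open Scope classical_set_scope.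

Definition spectral_radius (R : realType) (n : nat) (M : 'M[R]_n) : R :=
  sup [set Num.sqrt (complex.Re z ^+ 2 + complex.Im z ^+ 2) | z in [set z : R[i] |
         eigenvalue (map_mx (real_complex R) M) z]].

Definition levinger (R : realType) (n : nat) (A : 'M[R]_n) (t : R) : R :=
  spectral_radius ((1 - t) *: A + t *: A^T).

Definition strictly_concave_on (R : realType) (a b : R) (f : R -> R) : Prop :=
  forall x y l : R, a < x < b -> a < y < b -> x != y -> 0 < l < 1 ->
    (1 - l) * f x + l * f y < f ((1 - l) * x + l * y).

From HB Require Import structures.
From mathcomp Require Import all_boot all_order all_algebra.
From mathcomp Require Import all_classical all_reals.
From mathcomp Require Import complex.
From mathcomp Require Import ring lra zify.
Import Order.TTheory GRing.Theory Num.Theory.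
Local Open Scope ring_scope.
Local Open Scope classical_set_scope.

(* For 0 < t < 1, conjugating (1 - t) A + t A^T by diag (q ^+ i), where
   q = sqrt ((1 - t) / t), turns it into sqrt (t (1 - t)) (A + A^T), so
   r(t) = sqrt (t (1 - t)) * r(A + A^T).  The first factor is strictly concave on
   (0, 1), and r(A + A^T) > 0: a complex matrix whose eigenvalues all vanish is
   nilpotent by Cayley-Hamilton, whereas a nonzero real symmetric matrix is not,
   since S ^+ 2 = S *m S^T has the squared row norms of S on its diagonal. *)

Section EigenvalueAlgebra.
Context {F : fieldType}.

Lemma eigenvalueZ {n} {M : 'M[F]_n} {a} c : eigenvalue M a -> eigenvalue (c *: M) (c * a).
Proof.
move=> /eigenvalueP[v vM v_neq0]; apply/eigenvalueP; exists v => //.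
by rewrite -scalemxAr vM scalerA mulrC.
Qed.

Lemma eigenvalue_similar {n} (P M N : 'M[F]_n) :
  P \in unitmx -> P *m M = N *m P -> eigenvalue M =1 eigenvalue N.
Proof.
move=> Pu PM a; have /eqP defN : similar P M N by apply/similarP.
have /(similarLR Pu) defM : similar P M N by apply/similarP.
apply/idP/idP => [Ma|Na].
  by rewrite defM in Ma; apply: eigenvalue_conjmx Ma;
    rewrite ?stablemx_unit ?row_free_unit ?unitmx_inv.
by rewrite -defN in Na; apply: eigenvalue_conjmx Na;
  rewrite ?stablemx_unit ?row_free_unit.
Qed.

End EigenvalueAlgebra.

Lemma char_poly_prod_XsubC {F : closedFieldType} {n} (M : 'M[F]_n) :
  exists rs : seq F, char_poly M = \prod_(z <- rs) ('X - z%:P).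
Proof.
have [rs defp] := closed_field_poly_normal (char_poly M).
by exists rs; rewrite defp (monicP (char_poly_monic M)) scale1r.
Qed.

Lemma eigenvalues0_nilpotent {F : closedFieldType} {n} {M : 'M[F]_n.+1} :
  (forall a, eigenvalue M a -> a = 0) -> exists k, M ^+ k = 0.
Proof.
move=> eig0; have [rs defp] := char_poly_prod_XsubC M.
have rs0 : rs = nseq (size rs) 0.
  apply/all_pred1P/allP => z zrs; apply/eqP/eig0.
  by rewrite eigenvalue_root_char defp root_prod_XsubC.
exists (size rs); have := Cayley_Hamilton M.
by rewrite defp rs0 big_nseq iter_mulr_1 subr0 rmorphXn /= horner_mx_X size_nseq.
Qed.

Lemma trmxX (R : comPzRingType) n (M : 'M[R]_n) k : (M ^+ k)^T = M^T ^+ k.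
Proof.
elim: k => [|k IH]; first by rewrite !expr0 trmx1.
by rewrite exprS -mulmxE trmx_mul IH mulmxE -exprSr.
Qed.

Lemma mulmx_tr_eq0 (R : realDomainType) m n (A : 'M[R]_(m, n)) :
  A *m A^T = 0 -> A = 0.
Proof.
move=> AAt0; apply/matrixP => i j; rewrite mxE.
have sq0 : \sum_k A i k ^+ 2 = (A *m A^T) i i.
  by rewrite mxE; apply: eq_bigr => k _; rewrite mxE expr2.
rewrite AAt0 mxE in sq0.
apply/eqP; rewrite -sqrf_eq0; apply/eqP.
by apply: (psumr_eq0P _ sq0) => // k _; exact: sqr_ge0.
Qed.

Lemma sym_mx_nilpotent_eq0 {R : realDomainType} {n} {S : 'M[R]_n.+1} {k} :
  S^T = S -> S ^+ k = 0 -> S = 0.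
Proof.
move=> S_sym Sk0.
suff pow2 m : S ^+ (2 ^ m) = 0 -> S = 0.
  apply: (pow2 k); have k_le : (k <= 2 ^ k)%N by apply/ltnW/ltn_expl.
  by rewrite -(subnKC k_le) exprD Sk0 mul0r.
elim: m => [|m IH]; first by rewrite expr1.
rewrite expnSr exprM => Ssq0; apply: IH; apply: mulmx_tr_eq0.
by rewrite trmxX S_sym mulmxE -expr2.
Qed.

Lemma sup_scale {R : realType} (E : set R) s : 0 < s -> has_sup E ->
  sup [set s * x | x in E] = s * sup E.
Proof.
move=> s_gt0 [[x0 Ex0] [u ubu]].
have sE_ub : has_ubound [set s * x | x in E].
  by exists (s * u) => _ [x Ex <-]; rewrite ler_pM2l // ubu.
apply/le_anti/andP; split.
  apply: ge_sup; first by exists (s * x0), x0.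
  by move=> _ [x Ex <-]; rewrite ler_pM2l //; apply: ub_le_sup => //; exists u.
rewrite -ler_pdivlMl //; apply: ge_sup; first by exists x0.
by move=> x Ex; rewrite ler_pdivlMl //; apply: ub_le_sup => //; exists x.
Qed.

Section Spectrum.
Context {R : realType}.
Local Notation toC := (real_complex R).
Local Notation normc := (@Normc.normc R).
Local Open Scope complex_scope.

Definition spectrum {n} (M : 'M[R]_n) : set R[i] := [set z | eigenvalue (map_mx toC M) z].

Lemma spectral_radiusE n (M : 'M[R]_n) :
  spectral_radius M = sup [set normc z | z in spectrum M].
Proof. by rewrite /spectral_radius; congr (sup (image _ _)); apply/funext => -[]. Qed.

Lemma normc_ge0 (z : R[i]) : 0 <= normc z.
Proof. by case: z => *; exact: sqrtr_ge0. Qed.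

Lemma normc_scale (s : R) (z : R[i]) : 0 <= s -> normc (s%:C * z) = s * normc z.
Proof.
move=> s_ge0; rewrite Normc.normcM; congr (_ * _).
by rewrite /= expr0n addr0 sqrtr_sqr ger0_norm.
Qed.

Lemma has_sup_spectrum {n} (M : 'M[R]_n) : (0 < n)%N ->
  has_sup [set normc z | z in spectrum M].
Proof.
move=> n_gt0; split.
  by have [a Ma] := @eigenvalue_closed _ _ (map_mx toC M) n_gt0; exists (normc a), a.
have [rs defp] := char_poly_prod_XsubC (map_mx toC M).
exists (\sum_(z <- rs) normc z) => _ [w Mw <-].
have w_rs : w \in rs by rewrite -root_prod_XsubC -defp -eigenvalue_root_char.
by rewrite (big_rem w w_rs) /= lerDl sumr_ge0 // => z _; exact: normc_ge0.
Qed.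

Lemma spectrumZ n (M : 'M[R]_n) s : s != 0 ->
  spectrum (s *: M) = [set s%:C * z | z in spectrum M].
Proof.
rewrite -(fmorph_eq0 toC) => sC_neq0; rewrite /spectrum map_mxZ.
apply/seteqP; split => z /=.
  move=> sMz; exists (s%:C^-1 * z); last by rewrite mulrA mulfV ?mul1r.
  by have := eigenvalueZ s%:C^-1 sMz; rewrite scalerA mulVf ?scale1r.
by move=> [w Mw <-]; exact: eigenvalueZ.
Qed.

Lemma spectral_radiusZ n (M : 'M[R]_n) s : (0 < n)%N -> 0 < s ->
  spectral_radius (s *: M) = s * spectral_radius M.
Proof.
move=> n_gt0 s_gt0; rewrite !spectral_radiusE.
rewrite -(sup_scale _ _ s_gt0 (has_sup_spectrum M n_gt0)).
rewrite spectrumZ ?gt_eqF //; congr sup.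
have normc_sz z : normc (s%:C * z) = s * normc z by rewrite normc_scale ?ltW.
apply/seteqP; split => _ [_ [z Mz <-] <-].
  by exists (normc z); [exists z | rewrite normc_sz].
by exists (s%:C * z); [exists z | rewrite normc_sz].
Qed.

Lemma spectrum_similar {n} {P M N : 'M[R]_n} :
  P \in unitmx -> P *m M = N *m P -> spectrum M = spectrum N.
Proof.
move=> Pu PM.
have eigMN : eigenvalue (map_mx toC M) =1 eigenvalue (map_mx toC N).
  apply: (eigenvalue_similar (map_mx toC P)); first by rewrite map_unitmx; exact: Pu.
  by rewrite -!map_mxM PM.
by rewrite /spectrum; apply/seteqP; split => z /=; rewrite eigMN.
Qed.

Lemma spectral_radius_similar {n} {P M N : 'M[R]_n} :
  P \in unitmx -> P *m M = N *m P -> spectral_radius M = spectral_radius N.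
Proof. by move=> Pu PM; rewrite !spectral_radiusE (spectrum_similar Pu PM). Qed.

Lemma spectral_radius_gt0 {n} {S : 'M[R]_n.+1} : S^T = S -> S != 0 ->
  0 < spectral_radius S.
Proof.
move=> S_sym S_neq0; rewrite ltNge; apply/negP => rho_le0.
have eig0 a : eigenvalue (map_mx toC S) a -> a = 0.
  move=> Sa; apply: Normc.eq0_normc; apply/le_anti; rewrite normc_ge0 andbT.
  apply: le_trans rho_le0; rewrite spectral_radiusE.
  by apply: ub_le_sup; [case: (has_sup_spectrum S (ltn0Sn n)) | exists a].
have [k] := eigenvalues0_nilpotent eig0.
rewrite -rmorphXn /= => /eqP; rewrite map_mx_eq0 => /eqP.
by move/(sym_mx_nilpotent_eq0 S_sym)/eqP; apply/negP.
Qed.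

End Spectrum.

Lemma weighted_shift_diag_similar {R : comPzRingType} {n} {A : 'M[R]_n} {a b s q : R} :
  (forall i j : 'I_n, nat_of_ord j <> (nat_of_ord i).+1 -> A i j = 0) ->
  s * q = a -> q * b = s ->
  diag_mx (\row_(i < n) q ^+ i) *m (a *: A + b *: A^T) =
  (s *: (A + A^T)) *m diag_mx (\row_(i < n) q ^+ i).
Proof.
move=> A_shift sq_a qb_s; rewrite mul_diag_mx mul_mx_diag.
apply/matrixP => i j; rewrite !mxE.
have [ji|/eqP j_neq] := eqVneq (nat_of_ord j) i.+1.
  rewrite (A_shift j i); last by lia.
  by rewrite ji exprSr -sq_a; ring.
rewrite (A_shift i j) //.
have [ij|/eqP i_neq] := eqVneq (nat_of_ord i) j.+1.
  by rewrite ij exprSr -qb_s; ring.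
by rewrite (A_shift j i) //; ring.
Qed.

Lemma levinger_weighted_shift (R : realType) n (A : 'M[R]_n) t : (0 < n)%N ->
  (forall i j : 'I_n, nat_of_ord j <> (nat_of_ord i).+1 -> A i j = 0) -> 0 < t < 1 ->
  levinger A t = Num.sqrt (t * (1 - t)) * spectral_radius (A + A^T).
Proof.
move=> n_gt0 A_shift /andP[t_gt0 t_lt1].
set s := Num.sqrt (t * (1 - t)).
have s_gt0 : 0 < s by rewrite sqrtr_gt0 mulr_gt0 // subr_gt0.
have s_sq : s * (s / t) = 1 - t.
  rewrite mulrA -expr2 sqr_sqrtr ?mulr_ge0 ?subr_ge0 ?ltW //.
  by rewrite mulrAC divff ?mul1r // gt_eqF.
have qt_s : s / t * t = s by rewrite divfK // gt_eqF.
have D_unit : diag_mx (\row_(i < n) (s / t) ^+ i) \in unitmx.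
  rewrite unitmxE det_diag unitfE; apply/prodf_neq0 => i _.
  by rewrite mxE expf_neq0 // gt_eqF // divr_gt0.
have similar_scaled := weighted_shift_diag_similar A_shift s_sq qt_s.
by rewrite /levinger (spectral_radius_similar D_unit similar_scaled) spectral_radiusZ.
Qed.

Lemma strictly_concave_sqrt_mul_compl (R : realType) :
  strictly_concave_on 0 1 (fun t : R => Num.sqrt (t * (1 - t))).
Proof.
move=> x y l /andP[x_gt0 x_lt1] /andP[y_gt0 y_lt1] x_neq_y /andP[l_gt0 l_lt1].
rewrite -subr_gt0 in x_lt1; rewrite -subr_gt0 in y_lt1; rewrite -subr_gt0 in l_lt1.
set z := (1 - l) * x + l * y.
set a := Num.sqrt (x * (1 - x)); set b := Num.sqrt (y * (1 - y)).
have a2 : a ^+ 2 = x * (1 - x) by rewrite sqr_sqrtr // ltW // mulr_gt0.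
have b2 : b ^+ 2 = y * (1 - y) by rewrite sqr_sqrtr // ltW // mulr_gt0.
have jensen : ((1 - l) * a + l * b) ^+ 2 <= (1 - l) * a ^+ 2 + l * b ^+ 2.
  rewrite -subr_ge0 (_ : _ - _ = l * (1 - l) * (a - b) ^+ 2); last by ring.
  by rewrite mulr_ge0 ?sqr_ge0 // ltW // mulr_gt0.
have strict : (1 - l) * (x * (1 - x)) + l * (y * (1 - y)) < z * (1 - z).
  rewrite -subr_gt0 (_ : _ - _ = l * (1 - l) * (x - y) ^+ 2); last by rewrite /z; ring.
  by rewrite pmulr_rgt0 ?exprn_even_gt0 //= ?subr_eq0 // mulr_gt0.
have comb_ge0 : 0 <= (1 - l) * a + l * b by rewrite addr_ge0 ?mulr_ge0 ?sqrtr_ge0 ?ltW.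
rewrite -(ger0_norm comb_ge0) -sqrtr_sqr ltr_sqrt; last by rewrite mulr_gt0 /z; nra.
by rewrite (le_lt_trans jensen) // a2 b2.
Qed.

Lemma strictly_concave_on_scale {R : realType} {a b c : R} {f g : R -> R} :
  strictly_concave_on a b f -> 0 < c -> (forall t, a < t < b -> g t = f t * c) ->
  strictly_concave_on a b g.
Proof.
move=> f_conc c_gt0 gE x y l xab yab x_neq_y l01.
have zab : a < (1 - l) * x + l * y < b.
  by move: xab yab l01 => /andP[? ?] /andP[? ?] /andP[? ?]; apply/andP; split; nra.
rewrite !gE // (_ : _ + _ = ((1 - l) * f x + l * f y) * c); last by ring.
by rewrite ltr_pM2r // f_conc.
Qed.

Theorem theorem5 (R : realType) (n : nat) (A : 'M[R]_n)
  (hn : (2 <= n)%N)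
  (hshape : forall i j : 'I_n, nat_of_ord j <> (nat_of_ord i).+1 -> A i j = 0)
  (hnonneg : forall i j : 'I_n, 0 <= A i j)
  (hpos : exists i j : 'I_n, nat_of_ord j = (nat_of_ord i).+1 /\ 0 < A i j) :
  strictly_concave_on 0 1 (levinger A).
Proof.
move: A hshape hnonneg hpos; case: n hn => [//|n] _ A A_shift A_ge0 [i [j [_ Aij_gt0]]].
have S_sym : (A + A^T)^T = A + A^T by rewrite linearD /= trmxK addrC.
have S_neq0 : A + A^T != 0.
  apply/eqP => /matrixP/(_ i j)/eqP; rewrite !mxE gt_eqF //.
  by apply: (lt_le_trans Aij_gt0); rewrite lerDl.
apply: (strictly_concave_on_scale (strictly_concave_sqrt_mul_compl R)
  (spectral_radius_gt0 S_sym S_neq0)).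
by move=> t t01; exact: levinger_weighted_shift.
Qed.
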